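(* Let $\mathbb{F}$ be a field of characteristic not $2$ and let $\Phi: M_n(\mathbb{F}) \to M_r(\mathbb{F})$ be an additive Jordan homomorphism. Then $\Phi$ preserves double zero products, i.e. $\Phi(A)\Phi(B) = \Phi(B)\Phi(A) = 0$ whenever $AB = BA = 0$. If $\mathbb{F} = \mathbb{R}$ or $\mathbb{C}$, then moreover $\Phi(A)\Phi(B) = 0$ whenever $AB = 0$ and $A,B$ are both self-adjoint, or both symmetric.
   Context: An additive map $\Phi$ is a Jordan homomorphism if $\Phi(AB+BA) = \Phi(A)\Phi(B)+\Phi(B)\Phi(A)$ for all $A,B$. Self-adjoint means $A^*=A$ (conjugate transpose), symmetric means $A^{\mathrm t}=A$. *)

From HB Require Import structures.
From mathcomp Require Import all_boot all_order all_algebra.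
Set Implicit Arguments. Unset Strict Implicit. Unset Printing Implicit Defensive.
Import Order.TTheory GRing.Theory Num.Theory.
Local Open Scope ring_scope.

Definition additive_map (R : nzRingType) (n r : nat) (Phi : 'M[R]_n -> 'M[R]_r) :=
  forall A B, Phi (A + B) = Phi A + Phi B.

Definition jordan_hom (R : nzRingType) (n r : nat) (Phi : 'M[R]_n -> 'M[R]_r) :=
  forall A B, Phi (A *m B + B *m A) = Phi A *m Phi B + Phi B *m Phi A.

Definition adjmx (C : numClosedFieldType) (n : nat) (A : 'M[C]_n) : 'M[C]_n :=
  (map_mx Num.conj A)^T.

Definition self_adjoint (C : numClosedFieldType) (n : nat) (A : 'M[C]_n) :=
  adjmx A = A.

Definition symmetric_mx (R : nzRingType) (n : nat) (A : 'M[R]_n) := A^T = A.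

From HB Require Import structures.
From mathcomp Require Import all_boot all_order all_algebra.
Import Order.TTheory GRing.Theory Num.Theory.
Local Open Scope ring_scope.
Set Implicit Arguments. Unset Strict Implicit.

(* A Jordan homomorphism Phi (with 2 invertible) respects squares and triple
   products X Y X.  If D is idempotent and B is orthogonal to D on both sides,
   then Phi D is idempotent and anticommutes with Phi B, which forces
   Phi B Phi D = Phi D Phi B = 0; hence Phi kills products of B with the corner
   D M D.  For rank-one matrices x y and u v with y u = v x = 0 this settles the
   case y x <> 0 (x y is a multiple of an idempotent) and, by anticommutation,
   v u <> 0; otherwise x is perturbed into that case, or, when x y and u v share
   their row, x y = u v C + C u v with u v squaring to zero.  Finally an
   arbitrary double zero product is expanded as a sum of rank-one terms, one
   factor at a time. *)

Section AdditiveMap.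
Variables (R : nzRingType) (n r : nat) (Phi : 'M[R]_n -> 'M[R]_r).
Hypothesis Phi_add : additive_map Phi.

Lemma additive_map0 : Phi 0 = 0.
Proof. by apply: (addrI (Phi 0)); rewrite addr0 -Phi_add addr0. Qed.

Lemma additive_mapN X : Phi (- X) = - Phi X.
Proof. by apply: (addrI (Phi X)); rewrite -Phi_add !subrr additive_map0. Qed.

Lemma additive_mapB X Y : Phi (X - Y) = Phi X - Phi Y.
Proof. by rewrite Phi_add additive_mapN. Qed.

Lemma additive_map_sum m (G : 'I_m -> 'M[R]_n) :
  Phi (\sum_(i < m) G i) = \sum_(i < m) Phi (G i).
Proof. exact: (big_morph Phi Phi_add additive_map0). Qed.

End AdditiveMap.

Section JordanHom.
Variables (R : unitRingType) (n r : nat) (Phi : 'M[R]_n -> 'M[R]_r).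
Hypothesis two_unit : (2%:R : R) \is a GRing.unit.
Hypothesis Phi_add : additive_map Phi.
Hypothesis Phi_jordan : jordan_hom Phi.

Lemma mx_double_inj m p (M N : 'M[R]_(m, p)) : M + M = N + N -> M = N.
Proof.
move=> MN; have two_MN : (2%:R : R) *: M = 2%:R *: N by rewrite !scaler_nat !mulr2n.
by rewrite -[M]scale1r -[N]scale1r -(mulVr two_unit) -!scalerA two_MN.
Qed.

Lemma jordan_hom_sqr X : Phi (X *m X) = Phi X *m Phi X.
Proof. by apply: mx_double_inj; rewrite -Phi_add Phi_jordan. Qed.

Lemma jordan_hom_triple X Y : Phi (X *m Y *m X) = Phi X *m Phi Y *m Phi X.
Proof.
have expand m (U V : 'M[R]_m) : U *m (U *m V + V *m U) + (U *m V + V *m U) *m U =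
    (U *m U *m V + V *m (U *m U)) + (U *m V *m U + U *m V *m U).
  by rewrite mulmxDr mulmxDl !mulmxA [U *m V *m U + _]addrC addrACA.
have outer := Phi_jordan X (X *m Y + Y *m X); rewrite [Phi (X *m Y + _)]Phi_jordan in outer.
have inner := Phi_jordan (X *m X) Y; rewrite jordan_hom_sqr in inner.
apply: mx_double_inj; rewrite -Phi_add.
apply: (addrI (Phi (X *m X *m Y + Y *m (X *m X)))).
by rewrite -Phi_add -expand outer inner expand.
Qed.

Lemma jordan_hom_anticomm A B : A *m B = 0 -> B *m A = 0 ->
  Phi A *m Phi B = - (Phi B *m Phi A).
Proof.
move=> AB0 BA0; have := Phi_jordan A B.
rewrite AB0 BA0 addr0 additive_map0 // => /esym/eqP.
by rewrite addr_eq0 => /eqP.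
Qed.

Lemma jordan_hom_corner_mul0 D A B : D *m D = D -> D *m A *m D = A ->
  B *m D = 0 -> D *m B = 0 -> Phi A *m Phi B = 0.
Proof.
move=> DD DAD BD0 DB0.
have PDD : Phi D *m Phi D = Phi D by rewrite -jordan_hom_sqr DD.
have anti : Phi B *m Phi D = - (Phi D *m Phi B) by exact: jordan_hom_anticomm.
have BD : Phi B *m Phi D = - (Phi D *m Phi B *m Phi D).
  by rewrite -mulNmx -anti -mulmxA PDD.
have DB : Phi D *m Phi B = - (Phi D *m (Phi B *m Phi D)).
  by rewrite anti mulmxN opprK mulmxA PDD.
have comm : Phi D *m Phi B = Phi B *m Phi D by rewrite DB mulmxA -BD.
have PBD0 : Phi B *m Phi D = 0.
  by apply: mx_double_inj; rewrite addr0 {2}anti comm subrr.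
by rewrite -DAD jordan_hom_triple -mulmxA comm PBD0 mulmx0.
Qed.

Lemma jordan_hom_nil_mul0 B C : B *m B = 0 -> B *m C *m B = 0 ->
  Phi (B *m C + C *m B) *m Phi B = 0.
Proof.
move=> BB0 BCB0; rewrite Phi_jordan mulmxDl -jordan_hom_triple BCB0.
by rewrite additive_map0 // add0r -mulmxA -jordan_hom_sqr BB0 additive_map0 // mulmx0.
Qed.

End JordanHom.

Section RankOneExpansion.
Variables (F : fieldType) (n : nat).

Lemma rank1_expansion_lker m p (B : 'M[F]_(m, n)) (U : 'M[F]_(n, p)) :
  B *m U = 0 ->
  exists2 Y : 'M[F]_n, Y *m U = 0 & B = \sum_(k < n) col k B *m row k Y.
Proof.
move=> BU0; set Y := 1%:M - U *m pinvmx U.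
exists Y; first by rewrite mulmxBl mul1mx mulmxKpV ?subrr.
have {1}-> : B = B *m Y by rewrite mulmxBr mulmx1 mulmxA BU0 mul0mx subr0.
apply/matrixP => i j; rewrite !mxE summxE; apply: eq_bigr => k _.
by rewrite !mxE big_ord1 !mxE.
Qed.

End RankOneExpansion.

Section RankOne.
Variables (F : fieldType) (n r : nat) (Phi : 'M[F]_n -> 'M[F]_r).
Hypothesis two_neq0 : (2%:R : F) != 0.
Hypothesis Phi_add : additive_map Phi.
Hypothesis Phi_jordan : jordan_hom Phi.

Let two_unit : (2%:R : F) \is a GRing.unit. Proof. by rewrite unitfE. Qed.

Lemma jordan_hom_rank1_idem_mul0 (x u : 'cV[F]_n) (y v : 'rV[F]_n) :
  y *m u = 0 -> v *m x = 0 -> y *m x != 0 -> Phi (x *m y) *m Phi (u *m v) = 0.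
Proof.
move=> yu0 vx0 yx_neq0; set a := (y *m x) 0 0.
have yxE : y *m x = a%:M by exact: mx11_scalar.
have a_neq0 : a != 0 by apply: contraNneq yx_neq0; rewrite yxE => ->; rewrite raddf0.
have xy2 : x *m y *m (x *m y) = a *: (x *m y).
  by rewrite mulmxA -(mulmxA x y x) yxE mul_mx_scalar -scalemxAl.
apply: (jordan_hom_corner_mul0 two_unit Phi_add Phi_jordan (D := a^-1 *: (x *m y))).
- by rewrite -scalemxAl -scalemxAr scalerA xy2 scalerA -mulrA mulVf // mulr1.
- rewrite -!scalemxAl -!scalemxAr !scalerA xy2 -scalemxAl xy2 !scalerA.
  by rewrite mulfVK // mulVf // scale1r.
- by rewrite -scalemxAr !mulmxA -(mulmxA u v x) vx0 mulmx0 mul0mx scaler0.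
- by rewrite -scalemxAl mulmxA -(mulmxA x y u) yu0 mulmx0 mul0mx scaler0.
Qed.

Lemma cV_left_inverse (u : 'cV[F]_n) : u != 0 -> (pinvmx u^T)^T *m u = 1%:M.
Proof.
move=> u_neq0; rewrite -[u in _ *m u]trmxK -trmx_mul mulmxVp ?trmx1 //.
by rewrite /row_free rank_rV trmx_eq0 u_neq0.
Qed.

Lemma jordan_hom_rank1_nil_mul0 (x u : 'cV[F]_n) (v : 'rV[F]_n) :
  v *m x = 0 -> v *m u = 0 -> Phi (x *m v) *m Phi (u *m v) = 0.
Proof.
move=> vx0 vu0; have [->|u_neq0] := eqVneq u 0.
  by rewrite mul0mx additive_map0 // mulmx0.
set z := (pinvmx u^T)^T; have zu : z *m u = 1%:M by exact: cV_left_inverse.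
have uvx0 : u *m v *m (x *m z) = 0 by rewrite mulmxA -(mulmxA u) vx0 mulmx0 !mul0mx.
have -> : x *m v = u *m v *m (x *m z) + x *m z *m (u *m v).
  by rewrite uvx0 add0r -mulmxA (mulmxA z) zu mul1mx.
apply: (jordan_hom_nil_mul0 two_unit Phi_add Phi_jordan).
- by rewrite mulmxA -(mulmxA u v u) vu0 mulmx0 mul0mx.
- by rewrite uvx0 mul0mx.
Qed.

Lemma jordan_hom_rank1_mul0 (x u : 'cV[F]_n) (y v : 'rV[F]_n) :
  y *m u = 0 -> v *m x = 0 -> Phi (x *m y) *m Phi (u *m v) = 0.
Proof.
move=> yu0 vx0.
have [yx0|] := eqVneq (y *m x) 0; last exact: jordan_hom_rank1_idem_mul0.
have [vu0|vu_neq0] := eqVneq (v *m u) 0; last first.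
  rewrite (jordan_hom_anticomm Phi_add Phi_jordan).
  - by rewrite jordan_hom_rank1_idem_mul0 ?oppr0.
  - by rewrite mulmxA -(mulmxA x y u) yu0 mulmx0 mul0mx.
  - by rewrite mulmxA -(mulmxA u v x) vx0 mulmx0 mul0mx.
have [y_le_v|y_nle_v] := boolP (y <= v)%MS.
  rewrite -(mulmxKpV y_le_v) mulmxA.
  by apply: jordan_hom_rank1_nil_mul0; rewrite // mulmxA vx0 mul0mx.
(* Perturb x by a vector s of ker v not in ker y: then x y = (x + s) y - s y
   with both terms in the idempotent case. *)
have [k yNk_neq0] : exists k, (y *m cokermx v) 0 k != 0.
  apply/existsP; apply: contraR y_nle_v => /existsPn yN0.
  rewrite submxE; apply/eqP/matrixP => i k; rewrite ord1 [RHS]mxE.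
  exact: eqP (negbNE (yN0 k)).
set s := col k (cokermx v).
have vs0 : v *m s = 0 by rewrite /s colE mulmxA mulmx_coker mul0mx.
have ys_neq0 : y *m s != 0.
  apply: contra yNk_neq0; rewrite /s colE mulmxA -colE => /eqP/matrixP/(_ 0 0).
  by rewrite !mxE => ->.
have -> : x *m y = (x + s) *m y - s *m y by rewrite mulmxDl addrK.
rewrite additive_mapB // mulmxBl !jordan_hom_rank1_idem_mul0 ?subrr //.
- by rewrite mulmxDr vx0 vs0 addr0.
- by rewrite mulmxDr yx0 add0r.
Qed.

End RankOne.

Section DoubleZeroProduct.
Variables (F : fieldType) (n r : nat) (Phi : 'M[F]_n -> 'M[F]_r).
Hypothesis two_neq0 : (2%:R : F) != 0.
Hypothesis Phi_add : additive_map Phi.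
Hypothesis Phi_jordan : jordan_hom Phi.

Lemma jordan_hom_mul_rank1_0 A (u : 'cV[F]_n) (v : 'rV[F]_n) :
  A *m u = 0 -> v *m A = 0 -> Phi A *m Phi (u *m v) = 0.
Proof.
move=> Au0 vA0; have [Y Yu0 ->] := rank1_expansion_lker Au0.
rewrite additive_map_sum // mulmx_suml big1 // => k _.
apply: jordan_hom_rank1_mul0 => //; first by rewrite -row_mul Yu0 row0.
by rewrite colE mulmxA vA0 mul0mx.
Qed.

Lemma jordan_hom_double_zero_mul0 A B : A *m B = 0 -> B *m A = 0 ->
  Phi A *m Phi B = 0.
Proof.
move=> AB0 BA0; have [Y YA0 ->] := rank1_expansion_lker BA0.
rewrite additive_map_sum // mulmx_sumr big1 // => k _.
apply: jordan_hom_mul_rank1_0; first by rewrite colE mulmxA AB0 mul0mx.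
by rewrite -row_mul YA0 row0.
Qed.

End DoubleZeroProduct.

Lemma symmetric_mulmx0C (R : comNzRingType) n (A B : 'M[R]_n) :
  symmetric_mx A -> symmetric_mx B -> A *m B = 0 -> B *m A = 0.
Proof. by move=> symA symB AB0; rewrite -symA -symB -trmx_mul AB0 trmx0. Qed.

Lemma self_adjoint_mulmx0C (C : numClosedFieldType) n (A B : 'M[C]_n) :
  self_adjoint A -> self_adjoint B -> A *m B = 0 -> B *m A = 0.
Proof.
move=> saA saB AB0.
by rewrite -saA -saB /adjmx -trmx_mul -map_mxM AB0 raddf0 trmx0.
Qed.

Theorem lemma4p1 :
  (forall (F : fieldType) (n r : nat) (Phi : 'M[F]_n -> 'M[F]_r),
     (2%:R : F) != 0 -> additive_map Phi -> jordan_hom Phi ->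
     forall A B : 'M[F]_n, A *m B = 0 -> B *m A = 0 ->
       Phi A *m Phi B = 0 /\ Phi B *m Phi A = 0)
  /\
  (forall (C : numClosedFieldType) (n r : nat) (Phi : 'M[C]_n -> 'M[C]_r),
     additive_map Phi -> jordan_hom Phi ->
     forall A B : 'M[C]_n,
       (self_adjoint A /\ self_adjoint B) \/ (symmetric_mx A /\ symmetric_mx B) ->
       A *m B = 0 -> Phi A *m Phi B = 0)
  /\
  (forall (R : realFieldType) (n r : nat) (Phi : 'M[R]_n -> 'M[R]_r),
     additive_map Phi -> jordan_hom Phi ->
     forall A B : 'M[R]_n, symmetric_mx A -> symmetric_mx B ->
       A *m B = 0 -> Phi A *m Phi B = 0).
Proof.
split; [|split].
- move=> F n r Phi two_neq0 Phi_add Phi_jordan A B AB0 BA0.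
  by split; apply: jordan_hom_double_zero_mul0.
- move=> C n r Phi Phi_add Phi_jordan A B hAB AB0.
  apply: (jordan_hom_double_zero_mul0 _ Phi_add Phi_jordan AB0).
    by rewrite pnatr_eq0.
  case: hAB => [[saA saB]|[symA symB]].
    exact: self_adjoint_mulmx0C AB0.
  exact: symmetric_mulmx0C AB0.
- move=> R n r Phi Phi_add Phi_jordan A B symA symB AB0.
  apply: (jordan_hom_double_zero_mul0 _ Phi_add Phi_jordan AB0).
    by rewrite pnatr_eq0.
  exact: symmetric_mulmx0C AB0.
Qed.
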